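(* Let $\mathcal U=\{1,\dots,N\}$, $\mathcal P=\{S_1,\dots,S_r\}$ with $S_i\subseteq\mathcal U$ and $\bigcup_i S_i=\mathcal U$, and let $\alpha$ be a positive integer. Define $\bar A\in\{0,*\}^{N\times N}$ with $\bar A_{ii}=*$ and all off-diagonal entries $0$, $\bar B\in\{0,*\}^{N\times1}$ with all entries $*$, and $\bar C\in\{0,*\}^{r\times N}$ with $\bar C_{ij}=*$ iff $j\in S_i$; set $\gamma=\alpha-1$. For $\bar K\in\{0,*\}^{1\times r}$ let $S(\bar K)=\{S_j:\bar K_{1j}=*\}$. Then $\bar K$ is a (feasible) solution to the Sparsest Resilient Feedback Design Problem for $(\bar A,\bar B,\bar C)$ and $\gamma$, i.e. $\bar K\in\mathcal K_\gamma$, if and only if $S(\bar K)$ is a (feasible) solution of the minimum set multi-covering problem $(\mathcal U,\mathcal P,\alpha)$, i.e. every element of $\mathcal U$ lies in at least $\alpha$ sets of $S(\bar K)$.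
   Context: A structured system $(\bar A,\bar B,\bar C)$ has $\bar A\in\{0,*\}^{n\times n}$, $\bar B\in\{0,*\}^{n\times m}$, $\bar C\in\{0,*\}^{p\times n}$; a numerical realization is real $(A,B,C)$ vanishing wherever the structured matrix is $0$. For $\bar K\in\{0,*\}^{m\times p}$, $[\bar K]=\{K\in\mathbb R^{m\times p}:K_{ij}=0\text{ whenever }\bar K_{ij}=0\}$; $(\bar A,\bar B,\bar C,\bar K)$ has no structurally fixed modes (no SFMs) if some realization satisfies $\bigcap_{K\in[\bar K]}\sigma(A+BKC)=\emptyset$. $\bar K^{\mathcal I}$ is $\bar K$ with entries indexed by $\mathcal I$ set to $0$. $\mathcal K_\gamma=\{\bar K:(\bar A,\bar B,\bar C,\bar K^{\mathcal I})\text{ has no SFMs for all }|\mathcal I|\le\gamma\}$. Sparsest Resilient Feedback Design Problem: minimize the number of $*$ entries $\|\bar K\|_0$ over $\bar K\in\mathcal K_\gamma$. Minimum set multi-covering (MSMC) problem $(\mathcal U,\mathcal P,\alpha)$: find a minimum-cardinality subcollection of $\mathcal P$ covering each element of $\mathcal U$ at least $\alpha$ times. *)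

From mathcomp Require Import all_boot all_algebra.
From mathcomp Require Import reals Rstruct.
From mathcomp.real_closed Require Import complex.
Set Implicit Arguments. Unset Strict Implicit. Unset Printing Implicit Defensive.
Import GRing.Theory.
Local Open Scope ring_scope.

Notation Real := Rdefinitions.R.

(* A structured matrix in {0,*}^{m x n}: true = '*', false = '0'. *)
Notation smx m n := 'M[bool]_(m, n).

Definition realizes m n (Mb : smx m n) (M : 'M[Real]_(m, n)) : Prop :=
  forall i j, Mb i j = false -> M i j = 0.

Definition in_spectrum n (M : 'M[Real]_n) (l : Real[i]) : Prop :=
  eigenvalue (map_mx (fun x : Real => x%:C%C) M) l.

Definition no_SFM n m p (Ab : smx n n) (Bb : smx n m) (Cb : smx p n)
    (Kb : smx m p) : Prop :=
  exists (A : 'M[Real]_n) (B : 'M[Real]_(n, m)) (C : 'M[Real]_(p, n)),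
    [/\ realizes Ab A, realizes Bb B, realizes Cb C &
      forall l : Real[i], exists K : 'M[Real]_(m, p),
        realizes Kb K /\ ~ in_spectrum (A + B *m K *m C) l].

Definition zero_entries m p (Kb : smx m p) (I : {set 'I_m * 'I_p}) : smx m p :=
  \matrix_(i, j) (Kb i j && ((i, j) \notin I)).

Definition in_K_gamma n m p (Ab : smx n n) (Bb : smx n m) (Cb : smx p n)
    (gamma : nat) (Kb : smx m p) : Prop :=
  forall I : {set 'I_m * 'I_p}, (#|I| <= gamma)%N ->
    no_SFM Ab Bb Cb (zero_entries Kb I).

Definition red_A N : smx N N := \matrix_(i, j) (i == j).
Definition red_B N : smx N 1 := \matrix_(i, j) true.
Definition red_C N r (S : 'I_r -> {set 'I_N}) : smx r N :=
  \matrix_(i, j) (j \in S i).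

Definition multi_covers N r (S : 'I_r -> {set 'I_N}) (J : {set 'I_r})
    (alpha : nat) : Prop :=
  forall u : 'I_N, (alpha <= #|[set j in J | u \in S j]|)%N.

Definition S_of r (Kb : smx 1 r) : {set 'I_r} := [set j | Kb ord0 j].

From mathcomp Require Import all_boot all_algebra.
From mathcomp Require Import reals Rstruct.
From mathcomp.real_closed Require Import complex.
From mathcomp Require Import zify.
Set Implicit Arguments. Unset Strict Implicit. Unset Printing Implicit Defensive.
Import GRing.Theory Num.Theory.
Local Open Scope ring_scope.

(* Every column u of A + B K C is A_uu e_u plus the u-th column of the rank-one
   term B (K C), and (K C)_u vanishes unless K feeds back some output j with
   u in S_j.  So if the selected sets miss u, A_uu is an eigenvalue for every
   admissible K: a structurally fixed mode.  Conversely, if they cover U, take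
   A = diag(0, ..., N-1), B = 1 and 0/1 entries for C: K = 0 avoids every l
   outside the diagonal, and the 0/1 pattern K avoids each diagonal value u,
   since (K C)_u counts the selected sets containing u and is nonzero.  Finally,
   deleting any alpha - 1 entries of K leaves a cover iff K is an alpha-cover. *)

Section Eigenvalues.
Variable F : fieldType.

Lemma eigenvalueE n (M : 'M[F]_n) a : eigenvalue M a = (M - a%:M \notin unitmx).
Proof. by rewrite /eigenvalue /eigenspace kermx_eq0 row_free_unit. Qed.

Lemma eigenvalue_col n (M : 'M[F]_n) u a :
  col u M = a *: delta_mx u (0 : 'I_1) -> eigenvalue M a.
Proof.
move=> Mu; rewrite eigenvalueE; apply/negP => unitMa.
have : (M - a%:M) *m delta_mx u (0 : 'I_1) = 0.
  by rewrite mulmxBl -colE Mu mul_scalar_mx subrr.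
move/(congr1 (mulmx (invmx (M - a%:M)))); rewrite mulKmx // mulmx0.
by move/matrixP/(_ u 0); rewrite !mxE !eqxx; apply/eqP; rewrite oner_eq0.
Qed.

Lemma eigenvalue_diag n (d : 'rV[F]_n) a :
  eigenvalue (diag_mx d) a -> exists j, a = d 0 j.
Proof.
rewrite eigenvalue_root_char char_poly_trig // /root horner_prod.
case/prodf_eq0 => j _; rewrite !mxE eqxx mulr1n hornerXsubC subr_eq0 => /eqP ->.
by exists j.
Qed.

Lemma diag_add_rank1_eigenvector n (d w v : 'rV[F]_n) a j :
  v *m (diag_mx d + const_mx 1 *m w) = a *: v ->
  v 0 j * (d 0 j - a) + (\sum_i v 0 i) * w 0 j = 0.
Proof.
move/matrixP/(_ 0 j); rewrite mulmxDr mul_mx_diag mulmxA !mxE big_ord1 mxE.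
under eq_bigr do rewrite mxE mulr1.
by move=> Ev; rewrite mulrBr addrAC Ev mulrC subrr.
Qed.

Lemma diag_add_rank1_not_eigenvalue n (d w : 'rV[F]_n) u :
  injective (d 0) -> w 0 u != 0 ->
  ~~ eigenvalue (diag_mx d + const_mx 1 *m w) (d 0 u).
Proof.
move=> dI wu; apply/eigenvalueP => -[v /diag_add_rank1_eigenvector Ev]; apply/negP.
have sum_v0 : \sum_i v 0 i = 0.
  by move: (Ev u); rewrite subrr mulr0 add0r => /eqP; rewrite mulf_eq0 (negPf wu) orbF => /eqP.
have v_offu j : j != u -> v 0 j = 0.
  move=> ju; move: (Ev j); rewrite sum_v0 mul0r addr0 => /eqP.
  by rewrite mulf_eq0 subr_eq0 (inj_eq dI) (negPf ju) orbF => /eqP.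
have v_u : v 0 u = 0 by rewrite -sum_v0 (bigD1 u) //= big1 ?addr0.
by rewrite negbK; apply/eqP/rowP => j; rewrite mxE; case: (eqVneq j u) => [->|/v_offu].
Qed.

End Eigenvalues.

Section Reduction.
Variables (N r : nat) (S : 'I_r -> {set 'I_N}).

Lemma multi_covers1P J : multi_covers S J 1 <-> forall u, exists2 j, j \in J & u \in S j.
Proof.
split=> [cov u | cov u]; last first.
  by have [j jJ uj] := cov u; rewrite card_gt0; apply/set0Pn; exists j; rewrite inE jJ.
by have /card_gt0P[j] := cov u; rewrite inE => /andP[]; exists j.
Qed.

Lemma multi_covers_resilient J alpha : (0 < alpha)%N ->
  (forall D : {set 'I_r}, (#|D| <= alpha - 1)%N -> multi_covers S (J :\: D) 1) <->
  multi_covers S J alpha.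
Proof.
move=> alpha_gt0; split=> [cov u | cov D cD u].
  rewrite leqNgt; apply/negP => few.
  have /cov/multi_covers1P/(_ u)[j] : (#|[set j in J | u \in S j]| <= alpha - 1)%N by lia.
  by rewrite !inE => /andP[/negP + jJ] uj; rewrite jJ uj.
have : (#|[set j in J | u \in S j]| <= #|[set j in J :\: D | u \in S j]| + #|D|)%N.
  apply: leq_trans (leq_card_setU _ _); apply/subset_leq_card/subsetP => j.
  by rewrite !inE; case: (j \in D); rewrite ?orbT ?orbF.
by have := cov u; lia.
Qed.

Lemma card_row0 (I : {set 'I_1 * 'I_r}) : #|[set j | (ord0, j) \in I]| = #|I|.
Proof.
rewrite -[in RHS](_ : setX setT [set j | (ord0, j) \in I] = I).
  by rewrite cardsX cardsT card_ord mul1n.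
by apply/setP => -[i j]; rewrite in_setX !inE (ord1 i).
Qed.

Lemma S_of_zero_entries (Kb : smx 1 r) I :
  S_of (zero_entries Kb I) = S_of Kb :\: [set j | (ord0, j) \in I].
Proof. by apply/setP => j; rewrite !inE mxE andbC. Qed.

Lemma red_no_SFM_covers (Kb : smx 1 r) :
  no_SFM (red_A N) (red_B N) (red_C S) Kb -> multi_covers S (S_of Kb) 1.
Proof.
move=> [A [B [C [rA _ rC noFixed]]]]; apply/multi_covers1P => u.
case: (boolP [exists j in S_of Kb, u \in S j]) => [/exists_inP//|/exists_inPn uncovered].
have [K [rK]] := noFixed (A u u)%:C%C; case.
rewrite /in_spectrum eigenvalue_map; apply: (eigenvalue_col (u := u)).
have KC_u : (K *m C) 0 u = 0.
  rewrite mxE big1 // => j _; have := uncovered j; rewrite inE.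
  case: (boolP (Kb 0 j)) => [_ /(_ isT) uj | /negPf Kj _].
    by rewrite rC ?mulr0 // mxE (negPf uj).
  by rewrite rK ?mul0r // mxE.
apply/colP => i; rewrite -mulmxA !mxE big_ord1 KC_u mulr0 addr0.
by case: (eqVneq i u) => [->|iu]; rewrite ?mulr1 ?mulr0 // rA // mxE (negPf iu).
Qed.

Lemma red_covers_no_SFM (Kb : smx 1 r) :
  multi_covers S (S_of Kb) 1 -> no_SFM (red_A N) (red_B N) (red_C S) Kb.
Proof.
move=> cov; pose d : 'rV[Rdefinitions.R]_N := \row_j (j : nat)%:R.
have d_inj : injective (d 0) by move=> i j; rewrite !mxE => /eqP; rewrite eqr_nat => /eqP/val_inj.
pose C : 'M[Rdefinitions.R]_(r, N) := \matrix_(i, j) (j \in S i)%:R.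
exists (diag_mx d), (const_mx 1), C; split.
- by move=> i j; rewrite !mxE => ->.
- by move=> i j; rewrite mxE.
- by move=> i j; rewrite !mxE => ->.
move=> l; case: (boolP [exists u, l == (d 0 u)%:C%C]) => [/existsP[u /eqP ->] | /existsPn l_notd].
- pose K : 'rV[Rdefinitions.R]_r := \matrix_(i, j) (Kb i j)%:R.
  exists K; split; first by move=> i j; rewrite mxE => ->.
  have KC_u : (K *m C) 0 u = #|[set j in S_of Kb | u \in S j]|%:R.
    rewrite mxE -sum1_card natr_sum [RHS]big_mkcond; apply: eq_bigr => j _.
    by rewrite !mxE !inE -natrM mulnb; case: (_ && _).
  rewrite /in_spectrum eigenvalue_map -mulmxA; apply/negP/diag_add_rank1_not_eigenvalue => //.
  by rewrite KC_u pnatr_eq0 -lt0n.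
- exists 0; split; first by move=> i j; rewrite mxE.
  rewrite mulmx0 mul0mx addr0 /in_spectrum map_diag_mx => /eigenvalue_diag[j].
  by rewrite mxE; apply/eqP/l_notd.
Qed.

End Reduction.

Theorem lemma3 (N r : nat) (S : 'I_r -> {set 'I_N}) (alpha : nat)
    (Hcover : \bigcup_(i < r) S i = [set: 'I_N]) (Halpha : (0 < alpha)%N)
    (Kb : 'M[bool]_(1, r)) :
  in_K_gamma (red_A N) (red_B N) (red_C S) (alpha - 1) Kb <->
  multi_covers S (S_of Kb) alpha.
Proof.
rewrite -multi_covers_resilient //; split=> [inK D cD | cov I cI].
- have cDI : (#|setX [set: 'I_1] D| <= alpha - 1)%N by rewrite cardsX cardsT card_ord mul1n.
  have := red_no_SFM_covers (inK _ cDI); rewrite S_of_zero_entries.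
  by congr (multi_covers _ (_ :\: _) _); apply/setP => j; rewrite !inE.
- by apply/red_covers_no_SFM; rewrite S_of_zero_entries; apply/cov; rewrite card_row0.
Qed.
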